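(* Consider the following optical-network model. Each link $k$ has a set $A_k\subseteq\mathbb{Z}$ of available units. Each trait $t$ has a resource $\mathrm{RI}(t)$, a nonempty integer interval, and for each link $k$ the set $t\oplus k$ of derived traits satisfies: every $t'\in t\oplus k$ has $\mathrm{RI}(t')$ a maximal integer interval contained in $\mathrm{RI}(t)\cap A_k$, and for every maximal integer interval $J\subseteq \mathrm{RI}(t)\cap A_k$ there is $t'\in t\oplus k$ with $\mathrm{RI}(t')=J$. Fix a link $k$ and, for a label $l=(t_a,t_b)$ whose routes end at different nodes, let $l\oplus e=\{(t,t_b): t\in t_a\oplus k\}$, where appending $k$ makes both routes end at the same node. Let $\mathrm{cost}$ be a real-valued function on labels such that for any labels $l_i,l_j$: if $\mathrm{cost}(l_i)\le\mathrm{cost}(l_j)$ then $\mathrm{cost}(l')\le\mathrm{cost}(l)$ for all $l'\in l_i\oplus e$ and all $l\in l_j\oplus e$. Let $l_i=(t_{i,a},t_{i,b})$, $l_j=(t_{j,a},t_{j,b})$ be labels. If $l_i\preceq'_{\ne} l_j$, then for every $l\in l_j\oplus e$ there exists $l'\in l_i\oplus e$ with $l'\preceq'_{=} l$.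
   Context: A trait describes a route in an optical network with its cost and the interval of contiguous units available along it; $t\oplus k$ is the set of traits obtained by appending link $k$. A label is a pair of traits of two link-disjoint routes. For labels $l_i=(t_{i,a},t_{i,b})$, $l_j=(t_{j,a},t_{j,b})$ with routes ending at different nodes: $l_i\preceq'_{\ne} l_j$ iff $\mathrm{cost}(l_i)\le\mathrm{cost}(l_j)$, $\mathrm{RI}(t_{i,a})\supseteq\mathrm{RI}(t_{j,a})$ and $\mathrm{RI}(t_{i,b})\supseteq\mathrm{RI}(t_{j,b})$. For labels $l_i=(t_i,t'_i)$, $l_j=(t_j,t'_j)$ with both routes ending at the same node: $\mathrm{RI}(l_i)\supseteq_n\mathrm{RI}(l_j)$ iff $\mathrm{RI}(t_i)\supseteq\mathrm{RI}(t_j)$ and $\mathrm{RI}(t'_i)\supseteq\mathrm{RI}(t'_j)$; $\mathrm{RI}(l_i)\supseteq_x\mathrm{RI}(l_j)$ iff $\mathrm{RI}(t_i)\supseteq\mathrm{RI}(t'_j)$ and $\mathrm{RI}(t'_i)\supseteq\mathrm{RI}(t_j)$; $\mathrm{RI}(l_i)\supseteq_=\mathrm{RI}(l_j)$ iff one of these two holds; and $l_i\preceq'_= l_j$ iff $\mathrm{cost}(l_i)\le\mathrm{cost}(l_j)$ and $\mathrm{RI}(l_i)\supseteq_=\mathrm{RI}(l_j)$. *)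

From Stdlib Require Import ZArith Reals.
Set Implicit Arguments.

Open Scope Z_scope.

Definition zset := Z -> Prop.

Definition zsubset (I J : zset) : Prop := forall x, I x -> J x.
Definition zinter (I J : zset) : zset := fun x => I x /\ J x.

Definition is_interval (I : zset) : Prop :=
  exists a b : Z, a <= b /\ forall x, I x <-> a <= x <= b.

Definition maximal_interval_in (J S : zset) : Prop :=
  is_interval J /\ zsubset J S /\
  forall J', is_interval J' -> zsubset J J' -> zsubset J' S -> zsubset J' J.

Close Scope Z_scope.

(* A label is a pair of traits (of two link-disjoint routes). *)
Definition label (Trait : Type) : Type := (Trait * Trait)%type.

(* l (+) e = { (t, t_b) : t in t_a (+) k } for l = (t_a, t_b);
   ext t k t' means t' is in t (+) k. *)
Definition label_ext (Trait Link : Type) (ext : Trait -> Link -> Trait -> Prop)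
  (k : Link) (l l' : label Trait) : Prop :=
  ext (fst l) k (fst l') /\ (snd l') = (snd l).

Definition preceq_ne (Trait : Type) (RI : Trait -> zset) (cost : label Trait -> R)
  (li lj : label Trait) : Prop :=
  (cost li <= cost lj)%R /\ zsubset (RI (fst lj)) (RI (fst li)) /\ zsubset (RI (snd lj)) (RI (snd li)).

Definition RI_supseteq_n (Trait : Type) (RI : Trait -> zset) (li lj : label Trait) : Prop :=
  zsubset (RI (fst lj)) (RI (fst li)) /\ zsubset (RI (snd lj)) (RI (snd li)).
Definition RI_supseteq_x (Trait : Type) (RI : Trait -> zset) (li lj : label Trait) : Prop :=
  zsubset (RI (snd lj)) (RI (fst li)) /\ zsubset (RI (fst lj)) (RI (snd li)).
Definition RI_supseteq_eq (Trait : Type) (RI : Trait -> zset) (li lj : label Trait) : Prop :=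
  RI_supseteq_n RI li lj \/ RI_supseteq_x RI li lj.

Definition preceq_eq (Trait : Type) (RI : Trait -> zset) (cost : label Trait -> R)
  (li lj : label Trait) : Prop :=
  (cost li <= cost lj)%R /\ RI_supseteq_eq RI li lj.

(* The derived trait [t] of [l] is a maximal interval of RI(t_{j,a}) ∩ A_k, hence an
   interval inside the larger set RI(t_{i,a}) ∩ A_k.  Since that set is bounded, [RI t]
   extends to a maximal interval of it, and completeness of [ext] realises this interval
   as RI(t') for some t' in t_{i,a} (+) k.  The label (t', t_{i,b}) then dominates [l]
   in the non-crossed sense, and its cost is no larger by the hypothesis on [cost]. *)

From Stdlib Require Import ZArith Reals Lia Classical Zwf.

Open Scope Z_scope.

Lemma Z_bounded_below_has_min (P : Z -> Prop) (a : Z) :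
  (forall x, P x -> a <= x) -> (exists x, P x) ->
  exists m, P m /\ forall x, P x -> m <= x.
Proof.
  intros Hlow [x0 Px0]; apply NNPP; intros Hnomin.
  assert (Hnone : forall x, ~ P x).
  { intros x; induction x as [x IH] using (well_founded_ind (Zwf_well_founded a)).
    intros Px; apply Hnomin; exists x; split; [exact Px |].
    intros y Py; apply Z.nlt_ge; intros Hyx.
    apply (IH y); [split; [apply Hlow, Px | exact Hyx] | exact Py]. }
  exact (Hnone x0 Px0).
Qed.

Lemma Z_bounded_above_has_max (P : Z -> Prop) (b : Z) :
  (forall x, P x -> x <= b) -> (exists x, P x) ->
  exists m, P m /\ forall x, P x -> x <= m.
Proof.
  intros Hup [x0 Px0].
  destruct (Z_bounded_below_has_min (fun y => P (- y)) (- b)) as [m [Pm Hm]].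
  - intros y Py; specialize (Hup _ Py); lia.
  - exists (- x0); rewrite Z.opp_involutive; exact Px0.
  - exists (- m); split; [exact Pm |].
    intros x Px; specialize (Hm (- x)); rewrite Z.opp_involutive in Hm.
    specialize (Hm Px); lia.
Qed.

Lemma interval_in_maximal_interval (S I : zset) :
  (exists B, is_interval B /\ zsubset S B) ->
  is_interval I -> zsubset I S ->
  exists J, maximal_interval_in J S /\ zsubset I J.
Proof.
  intros [B [[a [b [_ HB]]] HSB]] [c [d [Hcd HI]]] HIS.
  assert (HS_bounds : forall x, S x -> a <= x <= b) by (intros x Sx; apply HB, HSB, Sx).
  assert (HS_cd : forall x, c <= x <= d -> S x) by (intros x Hx; apply HIS, HI, Hx).
  (* [lo] and [hi] are the furthest points to which [c, d] can be stretched inside S. *)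
  destruct (Z_bounded_below_has_min
              (fun x => x <= c /\ forall y, x <= y <= c -> S y) a) as [lo [[Hlo_c Hlo_S] Hlo_min]].
  { intros x [Hxc Hx]; specialize (HS_bounds x (Hx x ltac:(lia))); lia. }
  { exists c; split; [lia | intros y Hy; apply HS_cd; lia]. }
  destruct (Z_bounded_above_has_max
              (fun x => d <= x /\ forall y, d <= y <= x -> S y) b) as [hi [[Hhi_d Hhi_S] Hhi_max]].
  { intros x [Hdx Hx]; specialize (HS_bounds x (Hx x ltac:(lia))); lia. }
  { exists d; split; [lia | intros y Hy; apply HS_cd; lia]. }
  exists (fun x => lo <= x <= hi); split; [split; [| split] |].
  - exists lo, hi; split; [lia | tauto].
  - intros x Hx.
    destruct (Z_le_gt_dec x c); [apply Hlo_S; lia |].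
    destruct (Z_le_gt_dec x d); [apply HS_cd; lia | apply Hhi_S; lia].
  - intros J' [p [q [Hpq HJ']]] HJJ' HJ'S x Hx.
    assert (Hp : p <= lo) by (apply HJ', HJJ'; lia).
    assert (Hq : hi <= q) by (apply HJ', HJJ'; lia).
    assert (lo <= p) by (apply Hlo_min; split; [lia | intros y Hy; apply HJ'S, HJ'; lia]).
    assert (q <= hi) by (apply Hhi_max; split; [lia | intros y Hy; apply HJ'S, HJ'; lia]).
    apply HJ' in Hx; lia.
  - intros x Hx; apply HI in Hx; lia.
Qed.

Close Scope Z_scope.

Theorem proposition5
  (Trait Link : Type)
  (A : Link -> zset)
  (RI : Trait -> zset)
  (ext : Trait -> Link -> Trait -> Prop)
  (HRI : forall t, is_interval (RI t))
  (Hext_sound : forall t k t', ext t k t' ->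
      maximal_interval_in (RI t') (zinter (RI t) (A k)))
  (Hext_complete : forall t k (J : zset),
      maximal_interval_in J (zinter (RI t) (A k)) ->
      exists t', ext t k t' /\ forall x, RI t' x <-> J x)
  (k : Link)
  (cost : label Trait -> R)
  (Hcost : forall li lj : label Trait, (cost li <= cost lj)%R ->
      forall l' l, label_ext ext k li l' -> label_ext ext k lj l ->
      (cost l' <= cost l)%R)
  (li lj : label Trait) :
  preceq_ne RI cost li lj ->
  forall l, label_ext ext k lj l ->
  exists l', label_ext ext k li l' /\ preceq_eq RI cost l' l.
Proof.
  intros [Hcost_ij [HRI_a HRI_b]] l Hl; destruct Hl as [Hext_l Hsnd_l].
  destruct (Hext_sound _ _ _ Hext_l) as [_ [HI_lS _]].
  assert (HI_l_in_i : zsubset (RI (fst l)) (zinter (RI (fst li)) (A k))).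
  { intros x Hx; destruct (HI_lS x Hx); split; auto. }
  destruct (interval_in_maximal_interval (zinter (RI (fst li)) (A k)) (RI (fst l)))
    as [J [HJ HI_lJ]]; auto.
  { exists (RI (fst li)); split; [apply HRI | intros x []; auto]. }
  destruct (Hext_complete _ _ _ HJ) as [t' [Hext_t' HRI_t']].
  assert (Hl' : label_ext ext k li (t', snd li)) by (split; auto).
  exists (t', snd li); split; [exact Hl' |]; split.
  - apply (Hcost li lj Hcost_ij); [exact Hl' | split; auto].
  - left; split; simpl.
    + intros x Hx; apply HRI_t', HI_lJ, Hx.
    + rewrite Hsnd_l; exact HRI_b.
Qed.
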